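(* Let $m\ge 1$ and $l\ge 0$ be integers and put $k=2^m l+2^{m-1}$. Then $$c(k)=c(2^m l)\,F(m-1),$$ where $F(m-1)=2^{2^{m-1}}+1$.
   Context: For $n\ge 0$, $c(n)=\sum_{i=0}^{n}\left(\binom{n}{i}\bmod 2\right)2^{i}$, the integer whose binary digits form the $n$-th row of Pascal's triangle modulo $2$. $F(j)=2^{2^j}+1$ is the $j$-th Fermat number. *)

From mathcomp Require Import all_boot.
Set Implicit Arguments. Unset Strict Implicit. Unset Printing Implicit Defensive.

Definition c (n : nat) : nat := \sum_(0 <= i < n.+1) ('C(n, i) %% 2) * 2 ^ i.

Definition F (j : nat) : nat := 2 ^ (2 ^ j) + 1.

From mathcomp Require Import all_boot zify.

(* By Lucas' theorem in base 2^m, the parity of 'C(2^m l + b, 2^m q + r) with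
   b, r < 2^m is the product of the parities of 'C(l, q) and 'C(b, r).  So the
   binary row c(2^m l + b) is row b copied into the blocks of width 2^m that
   row l selects: c(2^m l + b) = c(2^m l) * c(b).  Take b = 2^(m-1), and note
   c(2^(m-1)) = 1 + 2^(2^(m-1)) because the row of a power of 2 is 1 0 ... 0 1. *)

Lemma odd_binSS n k : odd 'C(n.+2, k.+2) = odd 'C(n, k.+2) (+) odd 'C(n, k).
Proof.
have -> : 'C(n.+2, k.+2) = 'C(n, k.+2) + 2 * 'C(n, k.+1) + 'C(n, k).
  by rewrite !binS; lia.
by rewrite -addnA oddD oddD oddM.
Qed.

Lemma odd_bin_digit n k : k < 2 -> odd 'C(n.+2, k) = odd 'C(n, k).
Proof. by case: k => [_|[_|//]]; rewrite ?bin0 // !bin1 /= negbK. Qed.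

Lemma odd_bin_lucas2 a b i j : b < 2 -> j < 2 ->
  odd 'C(2 * a + b, 2 * i + j) = odd 'C(a, i) && odd 'C(b, j).
Proof.
move=> lt_b2 lt_j2; elim: a i => [|a IHa] [|i].
- by rewrite !muln0 !add0n bin0.
- by rewrite muln0 add0n bin_small ?bin0n //; lia.
- have -> : 2 * a.+1 + b = (2 * a + b).+2 by lia.
  by rewrite muln0 add0n odd_bin_digit // -[j]add0n -(muln0 2) IHa !bin0.
- have -> : 2 * a.+1 + b = (2 * a + b).+2 by lia.
  have -> : 2 * i.+1 + j = (2 * i + j).+2 by lia.
  rewrite odd_binSS.
  have -> : (2 * i + j).+2 = 2 * i.+1 + j by lia.
  by rewrite !IHa binS oddD -andb_addl.
Qed.

Lemma odd_bin_lucas m a b i j : b < 2 ^ m -> j < 2 ^ m ->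
  odd 'C(2 ^ m * a + b, 2 ^ m * i + j) = odd 'C(a, i) && odd 'C(b, j).
Proof.
elim: m a b i j => [|m IHm] a b i j; rewrite ?expnS => lt_b lt_j.
  have [-> ->] : b = 0 /\ j = 0 by lia.
  by rewrite !mul1n !addn0 bin0 andbT.
have digits x : x = 2 * (x %/ 2) + x %% 2 by lia.
have -> : 2 * 2 ^ m * a + b = 2 * (2 ^ m * a + b %/ 2) + b %% 2 by lia.
have -> : 2 * 2 ^ m * i + j = 2 * (2 ^ m * i + j %/ 2) + j %% 2 by lia.
rewrite odd_bin_lucas2 ?ltn_pmod // IHm; try lia.
by rewrite -andbA -odd_bin_lucas2 ?ltn_pmod // -!digits.
Qed.

(* The polynomial (1 + X)^n over GF(2), evaluated at x; c n is its value at 2. *)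
Definition bin2_eval (n x : nat) : nat :=
  \sum_(0 <= i < n.+1) odd 'C(n, i) * x ^ i.

Lemma bin2_eval_widen n x M : n < M ->
  bin2_eval n x = \sum_(0 <= i < M) odd 'C(n, i) * x ^ i.
Proof.
move=> lt_nM; rewrite /bin2_eval [RHS](big_cat_nat _ (n := n.+1)) //=.
rewrite [X in _ = _ + X]big_nat_cond [X in _ = _ + X]big1 ?addn0 //.
by move=> i /andP[/andP[lt_ni _] _]; rewrite bin_small.
Qed.

Lemma c_bin2_eval n : c n = bin2_eval n 2.
Proof. by apply: eq_bigr => i _; rewrite modn2. Qed.

Lemma c_mul_expn_add m l b : b < 2 ^ m ->
  c (2 ^ m * l + b) = bin2_eval l (2 ^ 2 ^ m) * c b.
Proof.
move=> lt_b.
rewrite !c_bin2_eval (@bin2_eval_widen _ _ (l.+1 * 2 ^ m)); last by lia.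
rewrite (@bin2_eval_widen b _ (2 ^ m)) // big_nat_mul big_distrl /=.
apply: eq_big_nat => q _.
rewrite -{1}[q * 2 ^ m]add0n big_addn mulSn addnK big_distrr /=.
apply: eq_big_nat => r /andP[_ lt_r].
by rewrite [r + _]addnC [q * _]mulnC odd_bin_lucas // -mulnb -expnM expnD mulnACA.
Qed.

Lemma c0 : c 0 = 1.
Proof. by rewrite /c big_nat1. Qed.

Lemma c_mul_expn m l : c (2 ^ m * l) = bin2_eval l (2 ^ 2 ^ m).
Proof. by rewrite -[_ * l]addn0 c_mul_expn_add ?expn_gt0 // c0 muln1. Qed.

Lemma c_expn m : c (2 ^ m) = F m.
Proof.
rewrite -[2 ^ m]muln1 c_mul_expn /bin2_eval !big_nat_recr //= big_geq //.
by rewrite /F add0n expn0 expn1 !mul1n addnC.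
Qed.

Theorem corollary4 (m l : nat) (hm : 1 <= m) :
  c (2 ^ m * l + 2 ^ m.-1) = c (2 ^ m * l) * F m.-1.
Proof.
case: m hm => [//|m] _ /=.
have lt_low : 2 ^ m < 2 ^ m.+1 by rewrite ltn_exp2l.
by rewrite c_mul_expn_add // c_mul_expn c_expn.
Qed.
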